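(* Let $\lambda,\mu$ be weights. If $\mu\subset\lambda$ then $\mu\le\lambda$ in the Bruhat order. Moreover: (i) if $a\lambda$ is an oriented cup diagram then $a=\underline\alpha$ for a unique weight $\alpha$ with $\alpha\subset\lambda$; (ii) if $\lambda b$ is an oriented cap diagram then $b=\overline\beta$ for a unique weight $\beta$ with $\lambda\supset\beta$; (iii) if $a\lambda b$ is an oriented circle diagram then $a=\underline\alpha$ and $b=\overline\beta$ for unique weights $\alpha,\beta$ with $\alpha\subset\lambda\supset\beta$.
   Context: A number line carries vertices indexed by consecutive integers. A weight labels each vertex by $\circ,\times,\vee,\wedge$ such that outside a finite set no $\vee$ is left of an $\wedge$. The Bruhat order $\le$ is generated by declaring that interchanging a $\vee$ with an $\wedge$ to its right makes a weight bigger. $\lambda\sim\mu$ if $\mu$ is obtained from $\lambda$ by permuting $\vee$'s and $\wedge$'s. A cup diagram consists of finitely many non-crossing cups joining pairs of vertices and rays down to infinity; cap diagrams similarly with caps and upward rays; $c^*$ is the mirror image. $c\lambda$ is an oriented cup diagram if free vertices are labelled $\circ/\times$, each cup has one $\vee$ and one $\wedge$ end, ray vertices are $\vee/\wedge$, and no two rays are labelled $\vee,\wedge$ in that order left to right; $\lambda c$ for a cap diagram is oriented if $c^*\lambda$ is. Degree: number of clockwise cups/caps (left end labelled $\wedge$). An oriented circle diagram $a\lambda b$ has $a\lambda$, $\lambda b$ oriented. $\underline\lambda$ is the unique cup diagram with $\underline\lambda\lambda$ oriented of degree $0$; $\overline\lambda=(\underline\lambda)^*$. $\mu\subset\lambda$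 (also written $\lambda\supset\mu$) means $\mu\sim\lambda$ and $\underline\mu\lambda$ is an oriented cup diagram. *)

From Stdlib Require Import ZArith List Relations.
Import ListNotations.
Open Scope Z_scope.

(** Labels of vertices: o, x, v (Down), ^ (Up). *)
Inductive label := Circ | Cross | Down | Up.

Definition isDown (l : label) : bool := match l with Down => true | _ => false end.

Definition labelling := Z -> label.

Definition is_weight (lam : labelling) : Prop :=
  exists F : list Z, forall i j, i < j -> ~ In i F -> ~ In j F ->
    ~ (lam i = Down /\ lam j = Up).

Definition bruhat_step (lam mu : labelling) : Prop :=
  exists i j, i < j /\ lam i = Down /\ lam j = Up /\
    mu i = Up /\ mu j = Down /\ (forall k, k <> i -> k <> j -> mu k = lam k).

Definition bruhat_le : relation labelling := clos_refl_trans labelling bruhat_step.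

(** lam ~ mu: mu is obtained from lam by (finitely) permuting v's and ^'s. *)
Definition sim (lam mu : labelling) : Prop :=
  (forall i, (lam i = Circ <-> mu i = Circ) /\ (lam i = Cross <-> mu i = Cross)) /\
  exists L : list Z, NoDup L /\ (forall i, ~ In i L -> lam i = mu i) /\
    length (filter (fun i => isDown (lam i)) L) = length (filter (fun i => isDown (mu i)) L).

(** Status of a vertex in a cup (or cap) diagram: free, end of a ray,
    or joined by a cup (cap) to vertex j. *)
Inductive vert := VFree | VRay | VArc (j : Z).
Definition arcs := Z -> vert.

Record cupdiag := CupDiag { cup_arcs : arcs }.
Record capdiag := CapDiag { cap_arcs : arcs }.

Definition cup_star (c : cupdiag) : capdiag := CapDiag (cup_arcs c).
Definition cap_star (b : capdiag) : cupdiag := CupDiag (cap_arcs b).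

Definition arcs_wf (d : arcs) : Prop :=
  (forall i j, d i = VArc j -> i <> j /\ d j = VArc i) /\
  (exists L : list Z, forall i j, d i = VArc j -> In i L) /\
  (forall i j k l, d i = VArc j -> d k = VArc l -> i < k < j -> i < l < j) /\
  (forall i j k, d i = VArc j -> d k = VRay -> ~ (i < k < j)).

Definition cup_wf (c : cupdiag) : Prop := arcs_wf (cup_arcs c).
Definition cap_wf (b : capdiag) : Prop := arcs_wf (cap_arcs b).

Definition oriented_cup (c : cupdiag) (lam : labelling) : Prop :=
  let d := cup_arcs c in
  (forall i, d i = VFree <-> (lam i = Circ \/ lam i = Cross)) /\
  (forall i j, d i = VArc j -> i < j ->
     (lam i = Down /\ lam j = Up) \/ (lam i = Up /\ lam j = Down)) /\
  (forall i, d i = VRay -> lam i = Down \/ lam i = Up) /\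
  (forall i j, i < j -> d i = VRay -> d j = VRay -> ~ (lam i = Down /\ lam j = Up)).

Definition oriented_cap (lam : labelling) (b : capdiag) : Prop :=
  oriented_cup (cap_star b) lam.

Definition oriented_circle (a : cupdiag) (lam : labelling) (b : capdiag) : Prop :=
  oriented_cup a lam /\ oriented_cap lam b.

Definition cup_degree (c : cupdiag) (lam : labelling) (n : nat) : Prop :=
  exists L : list Z, NoDup L /\
    (forall i, In i L <-> exists j, cup_arcs c i = VArc j /\ i < j /\ lam i = Up) /\
    length L = n.

Definition is_underline (lam : labelling) (c : cupdiag) : Prop :=
  cup_wf c /\ oriented_cup c lam /\ cup_degree c lam 0.

Definition is_overline (lam : labelling) (b : capdiag) : Prop :=
  exists c, is_underline lam c /\ b = cup_star c.

Definition wsubset (mu lam : labelling) : Prop :=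
  sim mu lam /\ exists c, is_underline mu c /\ oriented_cup c lam.

From Stdlib Require Import ZArith List Relations Lia Bool FunctionalExtensionality.
Import ListNotations.
Open Scope Z_scope.

(* A cup diagram [a] oriented by [lam] pins down the weight [alpha] with
   underline alpha = a: it has to agree with [lam] off the cups and be
   anticlockwise on every cup.  On free vertices agreement is forced by
   [alpha ~ lam]; on rays it follows from a count: among the finitely many
   positions where two ~-equivalent orientations of [a] differ, the cups carry
   equally many v's in both, so the rays there would carry a v->^ and a ^->v
   change, which violates the ray condition of one of the two orientations.
   Conversely this [alpha] is a weight, [alpha ~ lam], and [lam] arises from
   [alpha] by reversing its clockwise cups one at a time; each reversal turns a
   v...^ into ^...v, so [alpha <= lam].  Caps are cups of the mirror diagram. *)

Lemma filter_length_partition {A} (P Q : A -> bool) (l : list A) :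
  length (filter P l) =
  (length (filter P (filter Q l)) + length (filter P (filter (fun x => negb (Q x)) l)))%nat.
Proof.
  induction l as [|a l IH]; simpl; auto.
  destruct (Q a); simpl; destruct (P a); simpl; lia.
Qed.

Lemma filter_length_pos_iff {A} (P : A -> bool) (l : list A) :
  (0 < length (filter P l))%nat <-> exists x, In x l /\ P x = true.
Proof.
  split.
  - destruct (filter P l) as [|x r] eqn:E; simpl; [lia|]. intros _.
    exists x. apply filter_In. rewrite E. now left.
  - intros [x Hx]. apply filter_In in Hx. destruct (filter P l); simpl in *; [contradiction|lia].
Qed.

Lemma filter_length_le_involution {A} (P Q : A -> bool) (p : A -> A) (l : list A) :
  NoDup l ->
  (forall x, In x l -> P x = true -> In (p x) l /\ Q (p x) = true /\ p (p x) = x) ->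
  (length (filter P l) <= length (filter Q l))%nat.
Proof.
  intros Hnd Hp. rewrite <- (length_map p). apply NoDup_incl_length.
  - apply NoDup_map_NoDup_ForallPairs; [|now apply NoDup_filter].
    intros x y Hx Hy Hxy. apply filter_In in Hx, Hy.
    rewrite <- (proj2 (proj2 (Hp x (proj1 Hx) (proj2 Hx)))),
            <- (proj2 (proj2 (Hp y (proj1 Hy) (proj2 Hy)))), Hxy.
    reflexivity.
  - intros z Hz. apply in_map_iff in Hz as [x [<- Hx]]. apply filter_In in Hx as [Hx HPx].
    destruct (Hp x Hx HPx) as [? [? _]]. now apply filter_In.
Qed.

Definition isUp (l : label) : bool := match l with Up => true | _ => false end.
Definition isArc (v : vert) : bool := match v with VArc _ => true | _ => false end.
Definition partner (d : arcs) (i : Z) : Z := match d i with VArc j => j | _ => i end.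

Definition label_eq_dec (a b : label) : {a = b} + {a <> b}.
Proof. decide equality. Defined.

Definition labels_differ (f g : labelling) (i : Z) : bool :=
  if label_eq_dec (f i) (g i) then false else true.

Lemma labels_differ_spec f g i : labels_differ f g i = true <-> f i <> g i.
Proof. unfold labels_differ. destruct (label_eq_dec (f i) (g i)); intuition discriminate. Qed.

Lemma labels_differ_false f g i : labels_differ f g i = false -> f i = g i.
Proof. unfold labels_differ. destruct (label_eq_dec (f i) (g i)); easy. Qed.

Definition arcs_symmetric (d : arcs) : Prop :=
  forall i j, d i = VArc j -> i <> j /\ d j = VArc i.

Lemma sim_sym f g : sim f g -> sim g f.
Proof.
  intros [Hfree [L [Hnd [Hoff Hcount]]]]. split.
  - intros i. specialize (Hfree i). tauto.
  - exists L. split; [assumption|]. split; [|now symmetry].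
    intros i Hi. symmetry. now apply Hoff.
Qed.

Lemma sim_label_cases f g i : sim f g ->
  f i = g i \/ (f i = Down /\ g i = Up) \/ (f i = Up /\ g i = Down).
Proof.
  intros [Hfree _]. destruct (Hfree i) as [[C1 C2] [X1 X2]].
  destruct (f i), (g i); auto;
  solve [ discriminate (C1 eq_refl) | discriminate (C2 eq_refl)
        | discriminate (X1 eq_refl) | discriminate (X2 eq_refl) ].
Qed.

Lemma sim_differ_list f g : sim f g ->
  exists D, NoDup D /\ (forall i, In i D <-> f i <> g i) /\
    length (filter (fun i => isDown (f i)) D) = length (filter (fun i => isDown (g i)) D).
Proof.
  intros [_ [L [HL [Hoff Hcount]]]].
  exists (filter (labels_differ f g) L). split; [now apply NoDup_filter|]. split.
  - intros i. rewrite filter_In, labels_differ_spec. split; [tauto|].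
    intros Hi. split; [|assumption].
    destruct (in_dec Z.eq_dec i L) as [?|Hn]; [assumption|].
    now destruct (Hi (Hoff i Hn)).
  - rewrite (filter_length_partition _ (labels_differ f g) L) in Hcount.
    rewrite (filter_length_partition (fun i => isDown (g i)) (labels_differ f g) L) in Hcount.
    rewrite (filter_ext_in (fun i => isDown (f i)) (fun i => isDown (g i))
               (filter (fun i => negb (labels_differ f g i)) L)) in Hcount.
    { lia. }
    intros i Hi. apply filter_In in Hi as [_ Hi]. apply negb_true_iff in Hi.
    now rewrite (labels_differ_false _ _ _ Hi).
Qed.

Lemma oriented_cup_arc c f i j :
  arcs_symmetric (cup_arcs c) -> oriented_cup c f -> cup_arcs c i = VArc j ->
  (f i = Down /\ f j = Up) \/ (f i = Up /\ f j = Down).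
Proof.
  intros Hsym [_ [Harc _]] Hij. destruct (Hsym _ _ Hij) as [Hne Hji].
  destruct (Z.lt_total i j) as [Hlt|[Heq|Hgt]]; [auto|contradiction|].
  destruct (Harc j i Hji Hgt) as [[A B]|[A B]]; auto.
Qed.

Lemma oriented_cup_down_half c f l :
  arcs_symmetric (cup_arcs c) -> oriented_cup c f -> NoDup l ->
  (forall i, In i l -> exists j, cup_arcs c i = VArc j /\ In j l) ->
  (2 * length (filter (fun i => isDown (f i)) l) = length l)%nat.
Proof.
  intros Hsym Of Hnd Hl.
  assert (Hpartner : forall i, In i l ->
            In (partner (cup_arcs c) i) l /\
            ((f i = Down /\ f (partner (cup_arcs c) i) = Up) \/
             (f i = Up /\ f (partner (cup_arcs c) i) = Down)) /\
            partner (cup_arcs c) (partner (cup_arcs c) i) = i).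
  { intros i Hi. destruct (Hl i Hi) as [j [Hij Hj]].
    unfold partner. rewrite Hij, (proj2 (Hsym _ _ Hij)).
    split; [assumption|]. split; [|reflexivity]. now apply (oriented_cup_arc c). }
  rewrite <- (filter_length (fun i => isDown (f i)) l).
  rewrite (filter_ext_in (fun i => negb (isDown (f i))) (fun i => isUp (f i))).
  2:{ intros i Hi. destruct (Hpartner i Hi) as [_ [[[-> _]|[-> _]] _]]; reflexivity. }
  enough (length (filter (fun i => isDown (f i)) l) = length (filter (fun i => isUp (f i)) l))
    by lia.
  apply Nat.le_antisymm; apply (filter_length_le_involution _ _ (partner (cup_arcs c)) _ Hnd);
    intros i Hi HP; destruct (Hpartner i Hi) as [Hp [[[A B]|[A B]] Hpp]];
    rewrite A in HP; try discriminate; rewrite B; auto.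
Qed.

Section SimilarOrientations.

Variables (c : cupdiag) (f g : labelling).
Hypotheses (Hsym : arcs_symmetric (cup_arcs c))
  (Of : oriented_cup c f) (Og : oriented_cup c g) (Hsim : sim f g).

Lemma oriented_cup_sim_arc_differ i j :
  cup_arcs c i = VArc j -> f i <> g i -> f j <> g j.
Proof.
  intros Hij Hi.
  destruct (oriented_cup_arc c f i j Hsym Of Hij) as [[A B]|[A B]];
  destruct (oriented_cup_arc c g i j Hsym Og Hij) as [[A' B']|[A' B']]; congruence.
Qed.

Lemma oriented_cup_sim_differ_off_arcs_balanced :
  exists R, (forall i, In i R <-> f i <> g i /\ isArc (cup_arcs c i) = false) /\
    length (filter (fun i => isDown (f i)) R) = length (filter (fun i => isUp (f i)) R).
Proof.
  destruct (sim_differ_list f g Hsim) as [D [HndD [HD count_D]]].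
  set (arcD := filter (fun i => isArc (cup_arcs c i)) D).
  set (rayD := filter (fun i => negb (isArc (cup_arcs c i))) D).
  exists rayD. split.
  { intros i. unfold rayD. rewrite filter_In, HD, negb_true_iff. reflexivity. }
  assert (count_arcD : length (filter (fun i => isDown (f i)) arcD) =
                       length (filter (fun i => isDown (g i)) arcD)).
  { assert (HarcD : forall i, In i arcD -> exists j, cup_arcs c i = VArc j /\ In j arcD).
    { intros i Hi. apply filter_In in Hi as [HiD Hi]. apply HD in HiD.
      destruct (cup_arcs c i) as [| |j] eqn:Hij; try discriminate.
      exists j. split; [reflexivity|]. apply filter_In. split.
      - now apply HD, (oriented_cup_sim_arc_differ i).
      - now rewrite (proj2 (Hsym _ _ Hij)). }
    assert (Hnd : NoDup arcD) by now apply NoDup_filter.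
    pose proof (oriented_cup_down_half c f arcD Hsym Of Hnd HarcD).
    pose proof (oriented_cup_down_half c g arcD Hsym Og Hnd HarcD). lia. }
  rewrite (filter_length_partition _ (fun i => isArc (cup_arcs c i)) D) in count_D.
  rewrite (filter_length_partition (fun i => isDown (g i))
             (fun i => isArc (cup_arcs c i)) D) in count_D.
  fold arcD rayD in count_D.
  rewrite (filter_ext_in (fun i => isDown (g i)) (fun i => isUp (f i)) rayD) in count_D.
  { lia. }
  intros i Hi. apply filter_In in Hi as [Hi _]. apply HD in Hi.
  destruct (sim_label_cases f g i Hsim) as [E|[[-> ->]|[-> ->]]]; easy.
Qed.

Lemma oriented_cup_sim_ray_not_down_up k :
  cup_arcs c k = VRay -> ~ (f k = Down /\ g k = Up).
Proof.
  intros Hk [Fk Gk].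
  destruct oriented_cup_sim_differ_off_arcs_balanced as [R [HR count_R]].
  destruct (proj1 (filter_length_pos_iff (fun i => isUp (f i)) R)) as [q [Hq Fq]].
  { rewrite <- count_R. apply filter_length_pos_iff. exists k.
    rewrite HR, Hk, Fk. split; [split; [congruence|reflexivity]|reflexivity]. }
  apply HR in Hq as [Hdq Hq].
  assert (Fq' : f q = Up) by now destruct (f q).
  assert (Gq : g q = Down).
  { destruct (sim_label_cases f g q Hsim) as [E|[[E _]|[_ E]]]; congruence. }
  assert (Hq' : cup_arcs c q = VRay).
  { destruct (cup_arcs c q) eqn:Hcq; try discriminate; [|reflexivity].
    apply (proj1 Of) in Hcq. destruct Hcq; congruence. }
  destruct (Z.lt_total k q) as [Hlt|[->|Hlt]]; [|congruence|].
  - exact (proj2 (proj2 (proj2 Of)) k q Hlt Hk Hq' (conj Fk Fq')).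
  - exact (proj2 (proj2 (proj2 Og)) q k Hlt Hq' Hk (conj Gq Gk)).
Qed.

End SimilarOrientations.

Lemma oriented_cup_sim_eq_off_arcs c f g k :
  arcs_symmetric (cup_arcs c) -> oriented_cup c f -> oriented_cup c g -> sim f g ->
  (forall j, cup_arcs c k <> VArc j) -> f k = g k.
Proof.
  intros Hsym Of Og Hsim Hk.
  destruct (sim_label_cases f g k Hsim) as [E|[[Fk Gk]|[Fk Gk]]]; [assumption| |];
    destruct (cup_arcs c k) as [| |j] eqn:Hck;
    try (apply (proj1 Of) in Hck; destruct Hck; congruence);
    try (exfalso; now apply (Hk j)).
  - now destruct (oriented_cup_sim_ray_not_down_up c f g Hsym Of Og Hsim k Hck).
  - now destruct (oriented_cup_sim_ray_not_down_up c g f Hsym Og Of (sim_sym f g Hsim) k Hck).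
Qed.

Definition anticlockwise (d : arcs) (lam : labelling) : labelling :=
  fun i => match d i with VArc j => if i <? j then Down else Up | _ => lam i end.

Lemma anticlockwise_arc d lam i j :
  arcs_symmetric d -> d i = VArc j -> i < j ->
  anticlockwise d lam i = Down /\ anticlockwise d lam j = Up.
Proof.
  intros Hsym Hij Hlt. unfold anticlockwise.
  rewrite Hij, (proj2 (Hsym _ _ Hij)).
  rewrite (proj2 (Z.ltb_lt i j) Hlt), (proj2 (Z.ltb_ge j i) (Z.lt_le_incl _ _ Hlt)).
  split; reflexivity.
Qed.

Lemma anticlockwise_off_arcs d lam i :
  (forall j, d i <> VArc j) -> anticlockwise d lam i = lam i.
Proof.
  intros Hi. unfold anticlockwise. destruct (d i) as [| |j] eqn:E; try reflexivity.
  now destruct (Hi j).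
Qed.

Lemma oriented_cup_anticlockwise c lam :
  arcs_symmetric (cup_arcs c) -> oriented_cup c lam ->
  oriented_cup c (anticlockwise (cup_arcs c) lam).
Proof.
  intros Hsym Ol. destruct Ol as [Ofree [Oarc [Oray Orays]]].
  split; [|split; [|split]].
  - intros i. destruct (cup_arcs c i) as [| |j] eqn:E.
    + rewrite anticlockwise_off_arcs by congruence. rewrite <- (Ofree i), E. tauto.
    + rewrite anticlockwise_off_arcs by congruence.
      split; [discriminate|]. intros H. destruct (Oray i E), H; congruence.
    + unfold anticlockwise. rewrite E.
      split; [discriminate|]. now destruct (i <? j), 1.
  - intros i j Hij Hlt. left. now apply anticlockwise_arc.
  - intros i Hi. rewrite anticlockwise_off_arcs by congruence. auto.
  - intros i j Hlt Hi Hj. rewrite !anticlockwise_off_arcs by congruence. auto.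
Qed.

Lemma is_underline_anticlockwise c lam :
  cup_wf c -> oriented_cup c lam -> is_underline (anticlockwise (cup_arcs c) lam) c.
Proof.
  intros Hwf Ol. split; [assumption|]. split.
  - apply oriented_cup_anticlockwise; [exact (proj1 Hwf)|assumption].
  - exists []. split; [constructor|]. split; [|reflexivity].
    intros i. split; [easy|]. intros [j [Hij [Hlt Hup]]].
    rewrite (proj1 (anticlockwise_arc _ lam i j (proj1 Hwf) Hij Hlt)) in Hup. discriminate.
Qed.

Lemma is_weight_anticlockwise d lam :
  (exists L, forall i j, d i = VArc j -> In i L) -> is_weight lam ->
  is_weight (anticlockwise d lam).
Proof.
  intros [L HL] [F HF]. exists (F ++ L). intros i j Hlt Hi Hj.
  rewrite !anticlockwise_off_arcs.
  - apply HF; [assumption| |]; intros H; [apply Hi|apply Hj]; apply in_or_app; auto.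
  - intros k E. apply Hj, in_or_app. right. now apply (HL j k).
  - intros k E. apply Hi, in_or_app. right. now apply (HL i k).
Qed.

Lemma sim_anticlockwise c lam :
  cup_wf c -> oriented_cup c lam -> sim (anticlockwise (cup_arcs c) lam) lam.
Proof.
  intros Hwf Ol. destruct Hwf as [Hsym [[L HL] _]].
  pose proof (oriented_cup_anticlockwise c lam Hsym Ol) as Oa.
  split.
  - intros i. destruct (cup_arcs c i) as [| |j] eqn:E.
    1,2: rewrite anticlockwise_off_arcs by congruence; tauto.
    assert (~ (lam i = Circ \/ lam i = Cross)) by (rewrite <- (proj1 Ol i); congruence).
    assert (~ (anticlockwise (cup_arcs c) lam i = Circ \/
               anticlockwise (cup_arcs c) lam i = Cross)) by (rewrite <- (proj1 Oa i); congruence).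
    tauto.
  - set (LA := filter (fun i => isArc (cup_arcs c i)) (nodup Z.eq_dec L)).
    assert (HLA : forall i j, cup_arcs c i = VArc j -> In i LA).
    { intros i j Hij. apply filter_In. rewrite Hij. split; [|reflexivity].
      apply nodup_In. now apply (HL i j). }
    assert (Hclosed : forall i, In i LA -> exists j, cup_arcs c i = VArc j /\ In j LA).
    { intros i Hi. apply filter_In in Hi as [_ Hi].
      destruct (cup_arcs c i) as [| |j] eqn:Hij; try discriminate.
      exists j. split; [reflexivity|]. apply (HLA j i), (Hsym _ _ Hij). }
    assert (Hnd : NoDup LA) by apply NoDup_filter, NoDup_nodup.
    exists LA. split; [assumption|]. split.
    + intros i Hi. apply anticlockwise_off_arcs. intros j Hij. now apply Hi, (HLA i j).
    + pose proof (oriented_cup_down_half c _ LA Hsym Oa Hnd Hclosed).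
      pose proof (oriented_cup_down_half c lam LA Hsym Ol Hnd Hclosed). lia.
Qed.

Lemma is_underline_arc mu c i j :
  is_underline mu c -> cup_arcs c i = VArc j -> i < j -> mu i = Down /\ mu j = Up.
Proof.
  intros [_ [[_ [Harc _]] [L [_ [HL Hlen]]]]] Hij Hlt.
  destruct (Harc i j Hij Hlt) as [?|[Hi _]]; [assumption|].
  destruct L; [|discriminate]. destruct (proj2 (HL i)). now exists j.
Qed.

Lemma underline_sim_eq_anticlockwise c lam mu :
  is_underline mu c -> oriented_cup c lam -> sim mu lam ->
  mu = anticlockwise (cup_arcs c) lam.
Proof.
  intros Hu Ol Hsim. pose proof (proj1 (proj1 Hu)) as Hsym.
  apply functional_extensionality. intros i.
  destruct (cup_arcs c i) as [| |j] eqn:E.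
  1,2: rewrite anticlockwise_off_arcs by congruence;
       apply (oriented_cup_sim_eq_off_arcs c); try assumption; [apply Hu|congruence].
  destruct (Z.lt_total i j) as [Hlt|[<-|Hlt]].
  - rewrite (proj1 (anticlockwise_arc _ lam i j Hsym E Hlt)).
    exact (proj1 (is_underline_arc mu c i j Hu E Hlt)).
  - now destruct (Hsym _ _ E).
  - pose proof (proj2 (Hsym _ _ E)) as E'.
    rewrite (proj2 (anticlockwise_arc _ lam j i Hsym E' Hlt)).
    exact (proj2 (is_underline_arc mu c j i Hu E' Hlt)).
Qed.

(* Each arc is named by its left end: the arcs whose left end lies in [S]
   get their two labels exchanged. *)
Definition swap_arcs (d : arcs) (S : list Z) (mu : labelling) : labelling :=
  fun k => match d k with
           | VArc j => if in_dec Z.eq_dec (Z.min k j) S then mu j else mu k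
           | _ => mu k
           end.

Lemma swap_arcs_nil d mu : swap_arcs d [] mu = mu.
Proof.
  apply functional_extensionality. intros k. unfold swap_arcs.
  now destruct (d k).
Qed.

Lemma swap_arcs_cons_in d x S mu : In x S -> swap_arcs d (x :: S) mu = swap_arcs d S mu.
Proof.
  intros Hx. apply functional_extensionality. intros k. unfold swap_arcs.
  destruct (d k) as [| |j]; try reflexivity.
  destruct (in_dec Z.eq_dec (Z.min k j) (x :: S)) as [H|H], (in_dec Z.eq_dec (Z.min k j) S);
    try reflexivity; exfalso; simpl in H; intuition congruence.
Qed.

Lemma bruhat_step_swap_arcs d x y S mu :
  arcs_symmetric d -> d x = VArc y -> x < y -> ~ In x S -> mu x = Down -> mu y = Up ->
  bruhat_step (swap_arcs d S mu) (swap_arcs d (x :: S) mu).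
Proof.
  intros Hsym Hxy Hlt HxS Hx Hy. pose proof (proj2 (Hsym _ _ Hxy)) as Hyx.
  assert (Hmin : Z.min x y = x /\ Z.min y x = x) by lia.
  exists x, y. unfold swap_arcs. rewrite Hxy, Hyx, (proj1 Hmin), (proj2 Hmin).
  destruct (in_dec Z.eq_dec x S) as [?|_]; [contradiction|].
  destruct (in_dec Z.eq_dec x (x :: S)) as [_|H]; [|now destruct H; left].
  repeat split; try assumption.
  intros k Hkx Hky. destruct (d k) as [| |j] eqn:Hkj; try reflexivity.
  assert (Hmin_k : Z.min k j <> x).
  { intros Hm. destruct (Z.min_spec k j) as [[_ E]|[_ E]]; rewrite E in Hm; subst;
      [contradiction|]. rewrite (proj2 (Hsym _ _ Hkj)) in Hxy. congruence. }
  destruct (in_dec Z.eq_dec (Z.min k j) (x :: S)) as [H|H], (in_dec Z.eq_dec (Z.min k j) S);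
    try reflexivity; exfalso; simpl in H; intuition congruence.
Qed.

Lemma bruhat_le_swap_arcs d mu S :
  arcs_symmetric d ->
  (forall x y, d x = VArc y -> x < y -> mu x = Down /\ mu y = Up) ->
  (forall x, In x S -> exists y, d x = VArc y /\ x < y) ->
  bruhat_le mu (swap_arcs d S mu).
Proof.
  intros Hsym Hmu. induction S as [|x S IH]; intros HS.
  - rewrite swap_arcs_nil. apply rt_refl.
  - specialize (IH (fun z Hz => HS z (or_intror Hz))).
    destruct (in_dec Z.eq_dec x S) as [HxS|HxS].
    + now rewrite swap_arcs_cons_in.
    + apply (rt_trans _ _ _ _ _ IH), rt_step.
      destruct (HS x (or_introl eq_refl)) as [y [Hxy Hlt]].
      destruct (Hmu x y Hxy Hlt).
      now apply bruhat_step_swap_arcs with y.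
Qed.

Lemma bruhat_le_anticlockwise c lam :
  cup_wf c -> oriented_cup c lam -> bruhat_le (anticlockwise (cup_arcs c) lam) lam.
Proof.
  intros [Hsym [[L HL] _]] Ol. set (d := cup_arcs c).
  set (S := filter (fun i => match d i with
                             | VArc j => (i <? j) && isUp (lam i)
                             | _ => false end) L).
  assert (HS : forall x, In x S -> exists y, d x = VArc y /\ x < y).
  { intros x Hx. apply filter_In in Hx as [_ Hx].
    destruct (d x) as [| |y]; try discriminate.
    exists y. split; [reflexivity|]. apply andb_true_iff in Hx as [Hx _]. now apply Z.ltb_lt. }
  assert (Hswap : forall i j, d i = VArc j -> i < j ->
            swap_arcs d S (anticlockwise d lam) i = lam i /\
            swap_arcs d S (anticlockwise d lam) j = lam j).
  { intros i j Hij Hlt. assert (Hji : d j = VArc i) by apply (Hsym _ _ Hij).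
    destruct (anticlockwise_arc d lam i j Hsym Hij Hlt) as [Ai Aj].
    unfold swap_arcs. rewrite Hij, Hji.
    replace (Z.min i j) with i by lia. replace (Z.min j i) with i by lia.
    destruct (oriented_cup_arc c lam i j Hsym Ol Hij) as [[Li Lj]|[Li Lj]];
      destruct (in_dec Z.eq_dec i S) as [HiS|HiS].
    - apply filter_In in HiS as [_ HiS]. rewrite Hij, Li, andb_false_r in HiS. discriminate.
    - now rewrite Ai, Aj.
    - now rewrite Ai, Aj.
    - exfalso. apply HiS, filter_In. split; [now apply (HL i j)|].
      rewrite Hij, Li. apply andb_true_iff. split; [now apply Z.ltb_lt|reflexivity]. }
  replace lam with (swap_arcs d S (anticlockwise d lam)) at 2.
  { apply bruhat_le_swap_arcs; [assumption| |assumption]. intros. now apply anticlockwise_arc. }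
  apply functional_extensionality. intros k.
  destruct (d k) as [| |j] eqn:Hkj.
  1,2: unfold swap_arcs; rewrite Hkj; apply anticlockwise_off_arcs; congruence.
  destruct (Z.lt_total k j) as [Hlt|[<-|Hlt]].
  - exact (proj1 (Hswap k j Hkj Hlt)).
  - now destruct (Hsym _ _ Hkj).
  - exact (proj2 (Hswap j k (proj2 (Hsym _ _ Hkj)) Hlt)).
Qed.

Lemma wsubset_bruhat_le lam mu : wsubset mu lam -> bruhat_le mu lam.
Proof.
  intros [Hsim [c [Hu Ol]]].
  rewrite (underline_sim_eq_anticlockwise c lam mu Hu Ol Hsim).
  now apply bruhat_le_anticlockwise; [apply Hu|].
Qed.

Lemma underline_wsubset_iff lam a alpha :
  is_weight lam -> cup_wf a -> oriented_cup a lam ->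
  (is_weight alpha /\ is_underline alpha a /\ wsubset alpha lam) <->
  alpha = anticlockwise (cup_arcs a) lam.
Proof.
  intros Hw Hwf Ol. split.
  - intros [_ [Hu [Hsim _]]]. now apply (underline_sim_eq_anticlockwise a).
  - intros ->. split; [|split; [|split]].
    + apply is_weight_anticlockwise; [apply Hwf|assumption].
    + now apply is_underline_anticlockwise.
    + now apply sim_anticlockwise.
    + exists a. split; [now apply is_underline_anticlockwise|assumption].
Qed.

Lemma is_overline_iff beta b : is_overline beta b <-> is_underline beta (cap_star b).
Proof.
  split.
  - intros [c [Hu ->]]. now destruct c.
  - intros Hu. exists (cap_star b). split; [assumption|]. now destruct b.
Qed.

Theorem lemma2p3 :
  (forall lam mu : labelling, is_weight lam -> is_weight mu ->
     wsubset mu lam -> bruhat_le mu lam) /\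
  (forall (lam : labelling) (a : cupdiag), is_weight lam -> cup_wf a ->
     oriented_cup a lam ->
     exists! alpha, is_weight alpha /\ is_underline alpha a /\ wsubset alpha lam) /\
  (forall (lam : labelling) (b : capdiag), is_weight lam -> cap_wf b ->
     oriented_cap lam b ->
     exists! beta, is_weight beta /\ is_overline beta b /\ wsubset beta lam) /\
  (forall (lam : labelling) (a : cupdiag) (b : capdiag), is_weight lam ->
     cup_wf a -> cap_wf b -> oriented_circle a lam b ->
     exists! ab : labelling * labelling,
       is_weight (fst ab) /\ is_weight (snd ab) /\
       is_underline (fst ab) a /\ is_overline (snd ab) b /\
       wsubset (fst ab) lam /\ wsubset (snd ab) lam).
Proof.
  assert (Hcap : forall lam b beta, is_weight lam -> cap_wf b -> oriented_cap lam b ->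
            (is_weight beta /\ is_overline beta b /\ wsubset beta lam) <->
            beta = anticlockwise (cap_arcs b) lam).
  { intros lam b beta Hw Hwf Ol. rewrite is_overline_iff.
    exact (underline_wsubset_iff lam (cap_star b) beta Hw Hwf Ol). }
  split; [|split; [|split]].
  - intros lam mu _ _. apply wsubset_bruhat_le.
  - intros lam a Hw Hwf Ol. exists (anticlockwise (cup_arcs a) lam).
    split; [now apply underline_wsubset_iff|].
    intros alpha H. symmetry. now apply (underline_wsubset_iff lam a).
  - intros lam b Hw Hwf Ol. exists (anticlockwise (cap_arcs b) lam).
    split; [now apply Hcap|].
    intros beta H. symmetry. now apply (Hcap lam b).
  - intros lam a b Hw Hwa Hwb [Oa Ob].
    exists (anticlockwise (cup_arcs a) lam, anticlockwise (cap_arcs b) lam). split.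
    + destruct (proj2 (underline_wsubset_iff lam a _ Hw Hwa Oa) eq_refl) as [? [? ?]].
      destruct (proj2 (Hcap lam b _ Hw Hwb Ob) eq_refl) as [? [? ?]].
      simpl. tauto.
    + intros [alpha beta] (Wa & Wb & Ua & Ub & Sa & Sb). simpl in *.
      rewrite (proj1 (underline_wsubset_iff lam a alpha Hw Hwa Oa)) by tauto.
      rewrite (proj1 (Hcap lam b beta Hw Hwb Ob)) by tauto.
      reflexivity.
Qed.
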